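(* Let $K\in\{\mathbb R,\mathbb C,\mathbb H\}$ and let $(E,d)$ be a metric vector space over $K$ such that $d$ is $C_0$-translation invariant and $(C_1,C_2,C_3)$-lipschitz multiplicative. Let $d_0(x,y)=\int_{\mathbb U}d(ux,uy)\,d\mu(u)$, $\delta_0(x,y)=\lim_{n\to\infty}\frac1n d_0(nx,ny)$, and $E_0=\{x\in E:\delta_0(x,0)=0\}$ (the maximal linear subspace of $E$ on which $d$ is bounded). For a class $\bar x=x+E_0\in E/E_0$ set $\|\bar x\|=\delta_0(x,0)$. Then this is independent of the representative $x$ of $\bar x$, and $\|\cdot\|:E/E_0\to\mathbb R_+$ is a norm.
   Context: A metric vector space is a topological vector space over $K$ whose topology is generated by the metric $d$. $\mathbb U=\{u\in K:|u|=1\}$, $\mu$ the right-invariant Haar probability measure on $\mathbb U$. $d$ is $C_0$-translation invariant if $d(x+z,y+z)\le d(x,y)+C_0$ for all $x,y,z$. $(C_1,C_2,C_3)$-lipschitz multiplicative ($C_1\ge1$, $C_2,C_3\ge0$) means $C_1^{-1}|\lambda|d(x,y)-C_2|\lambda|-C_3\le d(\lambda x,\lambda y)\le C_1|\lambda|d(x,y)+C_2|\lambda|+C_3$ for all $\lambda\in K$, $x,y\in E$. (Under these hypotheses the limit defining $\delta_0$ exists.) *)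

From HB Require Import structures.
From mathcomp Require Import all_boot all_order all_algebra.
From mathcomp Require Import all_classical all_reals all_analysis.
Import Order.TTheory GRing.Theory Num.Theory.
Import numFieldNormedType.Exports.

Set Implicit Arguments.
Unset Strict Implicit.
Unset Printing Implicit Defensive.

Local Open Scope ring_scope.
Local Open Scope classical_set_scope.

(* K is a unital associative R-algebra equipped with an absolute value  *)
(* absK (multiplicative, definite, subadditive, extending |.| on R).   *)
(* By the Urbanik-Wright / Frobenius-Mazur theorem such a K is          *)
(* isometrically isomorphic to R, C or H.                *)

Definition is_absval (R : realType) (K : unitAlgType R) (absK : K -> R) :=
  [/\ forall x y : K, absK (x * y) = absK x * absK y,
      forall x : K, absK x = 0 <-> x = 0,
      forall x y : K, absK (x + y) <= absK x + absK y
    & forall r : R, absK (r *: (1 : K)) = `|r| ].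

(* carrier of K, seen as a pointed type (needed for the Borel sigma-algebra) *)
Definition Kpt (R : realType) (K : unitAlgType R) : Type := K.
HB.instance Definition _ (R : realType) (K : unitAlgType R) :=
  Choice.on (Kpt K).
HB.instance Definition _ (R : realType) (K : unitAlgType R) :=
  isPointed.Build (Kpt K) (0 : K).

Definition Kopen (R : realType) (K : unitAlgType R) (absK : K -> R)
  : set (set (Kpt K)) :=
  [set A | forall x : K, A x ->
     exists2 e : R, 0 < e & forall y : K, absK (y - x) < e -> A y].

Definition KBorel (R : realType) (K : unitAlgType R) (absK : K -> R) :=
  g_sigma_algebraType (Kopen absK).

Definition Usph (R : realType) (K : unitAlgType R) (absK : K -> R)
  : set (KBorel absK) := [set u | absK u = 1].
Arguments Usph {R K} absK _.

Definition right_haar_on_U (R : realType) (K : unitAlgType R) (absK : K -> R)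
  (mu : probability (KBorel absK) R) :=
  mu (Usph absK) = 1%E /\
  forall v : K, absK v = 1 ->
    forall A : set (KBorel absK), measurable A ->
      mu ((fun u : KBorel absK => (u : K) * v) @^-1` A) = mu A.

Definition is_metric (R : realType) (T : Type) (d : T -> T -> R) :=
  [/\ forall x y, 0 <= d x y,
      forall x y, d x y = 0 <-> x = y,
      forall x y, d x y = d y x
    & forall x y z, d x z <= d x y + d y z ].

Definition metric_vector_space (R : realType) (K : unitAlgType R)
  (absK : K -> R) (E : lmodType K) (d : E -> E -> R) :=
  [/\ is_metric d,
      forall (x y : E) (e : R), 0 < e -> exists2 r : R, 0 < r &
        forall x' y' : E, d x x' < r -> d y y' < r -> d (x + y) (x' + y') < e
    & forall (l : K) (x : E) (e : R), 0 < e -> exists2 r : R, 0 < r &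
        forall (l' : K) (x' : E), absK (l - l') < r -> d x x' < r ->
          d (l *: x) (l' *: x') < e ].

Definition translation_invariant_up_to (R : realType) (E : zmodType)
  (d : E -> E -> R) (C0 : R) :=
  forall x y z : E, d (x + z) (y + z) <= d x y + C0.

Definition lipschitz_multiplicative (R : realType) (K : unitAlgType R)
  (absK : K -> R) (E : lmodType K) (d : E -> E -> R) (C1 C2 C3 : R) :=
  [/\ 1 <= C1, 0 <= C2, 0 <= C3 &
      forall (l : K) (x y : E),
        C1^-1 * absK l * d x y - C2 * absK l - C3 <= d (l *: x) (l *: y) /\
        d (l *: x) (l *: y) <= C1 * absK l * d x y + C2 * absK l + C3 ].

Definition d0 (R : realType) (K : unitAlgType R) (absK : K -> R)
  (mu : probability (KBorel absK) R) (E : lmodType K) (d : E -> E -> R)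
  (x y : E) : R :=
  fine (\int[mu]_(u in Usph absK) (d ((u : K) *: x) ((u : K) *: y))%:E)%E.

Definition delta0 (R : realType) (K : unitAlgType R) (absK : K -> R)
  (mu : probability (KBorel absK) R) (E : lmodType K) (d : E -> E -> R)
  (x y : E) : R :=
  limn ((fun n : nat => n%:R^-1 * d0 mu d (x *+ n) (y *+ n)) : R^nat).

Definition E0 (R : realType) (K : unitAlgType R) (absK : K -> R)
  (mu : probability (KBorel absK) R) (E : lmodType K) (d : E -> E -> R)
  : set E := [set x | delta0 mu d x 0 = 0].

(* Averaging d over the unit sphere U keeps translation invariance up to C0
   and Lipschitz multiplicativity, and makes the distance U-invariant since mu
   is right invariant.  Then n |-> d0(nx, 0) is subadditive up to C0, so by
   Fekete's lemma d0(nx, 0) / n converges; the limit delta0(x, 0) is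
   subadditive, U-invariant and homogeneous for integer multiples, and
   satisfies delta0(s x, 0) <= C1 s delta0(x, 0) for reals s >= 0.
   Approximating n t by its integer part upgrades this to homogeneity for
   reals t >= 0, and the polar decomposition l = |l| (l / |l|) gives
   delta0(l x, 0) = |l| delta0(x, 0).  A nonnegative subadditive absolutely
   homogeneous function is a seminorm: its kernel E0 is a subspace and it is
   constant on the cosets of E0. *)

From HB Require Import structures.
From mathcomp Require Import all_boot all_order all_algebra.
From mathcomp Require Import all_classical all_reals all_analysis.
From mathcomp Require Import ring lra.
Import Order.TTheory GRing.Theory Num.Theory.
Import numFieldNormedType.Exports.
Set Implicit Arguments.
Unset Strict Implicit.
Unset Printing Implicit Defensive.

Local Open Scope ring_scope.
Local Open Scope classical_set_scope.

Section Sequences.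
Variable R : realType.

Lemma cvg_divn (c : R) : c / n%:R @[n --> \oo] --> 0.
Proof.
have n_gt0 : \forall n \near \oo, (0 : R) < n%:R.
  by near=> n; rewrite ltr0n; near: n; exact: nbhs_infty_gt.
have /(gtr0_cvgV0 n_gt0) inv_cvg0 := @cvgr_idn R.
by rewrite -(mulr0 c); apply: cvgM => //; exact: cvg_cst.
Unshelve. all: by end_near. Qed.

Lemma le0_nat_mul_bounded (x c : R) : (forall n, n%:R * x <= c) -> x <= 0.
Proof.
move=> bnd; rewrite leNgt; apply/negP => x_gt0.
have := bnd (Num.truncn (c / x)).+1.
rewrite -ler_pdivlMr // leNgt => /negP; apply.
by rewrite (lt_le_trans (truncnS_gt _)) // -natr1.
Qed.

Section Fekete.
Variables (a : R^nat) (c : R).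
Hypotheses (c_ge0 : 0 <= c) (a_ge0 : forall n, 0 <= a n)
  (a_subadd : forall m n, a (m + n)%N <= a m + a n + c).

Let b n := a n + c.

Let b_ge0 n : 0 <= b n. Proof. by rewrite addr_ge0. Qed.

Let b_muladd q m r : b (q * m + r)%N <= q%:R * b m + b r.
Proof.
elim: q => [|q IH]; first by rewrite mul0n add0n mul0r add0r.
rewrite mulSn -addnA mulrSr; apply: (le_trans (y := b m + b (q * m + r)%N)).
  by rewrite /b; have := a_subadd m (q * m + r); lra.
by lra.
Qed.

Let b_div_le m n : (0 < m)%N -> (0 < n)%N ->
  b n / n%:R <= b m / m%:R + (\sum_(r < m) b r) / n%:R.
Proof.
move=> m_gt0 n_gt0; have n_gt0' : (0 : R) < n%:R by rewrite ltr0n.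
have m_gt0' : (0 : R) < m%:R by rewrite ltr0n.
rewrite ler_pdivrMr // mulrDl divfK ?gt_eqF //.
apply: (le_trans (y := (n %/ m)%:R * b m + b (n %% m))).
  by rewrite {1}(divn_eq n m) b_muladd.
apply: lerD; last first.
  by rewrite (bigD1 (Ordinal (ltn_pmod n m_gt0))) //= lerDl sumr_ge0.
have -> : b m / m%:R * n%:R = n%:R / m%:R * b m by ring.
by rewrite ler_wpM2r // ler_pdivlMr // -natrM ler_nat leq_trunc_div.
Qed.

Lemma fekete_cvg :
  a n / n%:R @[n --> \oo] --> inf [set (a n + c) / n%:R | n in [set n | (0 < n)%N]].
Proof.
set S := [set _ | _ in _].
have S_lb : lbound S 0 by move=> _ [n _ <-]; rewrite divr_ge0 ?addr_ge0.
have S_inf : has_inf S by split; [exists (b 1%N / 1%:R), 1%N | exists 0].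
apply/cvgrPdist_lt => e e_gt0; have e2_gt0 : 0 < e / 2 by rewrite divr_gt0.
have [_ [m /= m_gt0 <-] bm_lt] := inf_adherent e2_gt0 S_inf.
have {}bm_lt : b m / m%:R < inf S + e / 2 := bm_lt.
near=> n.
have n_gt0 : (0 < n)%N by near: n; exact: nbhs_infty_gt.
have inf_le : inf S <= b n / n%:R by apply: (ge_inf S_inf.2); exists n.
have bn_le := @b_div_le m n m_gt0 n_gt0.
have sum_small : (\sum_(r < m) b r) / n%:R < e / 2.
  by near: n; exact: cvgr_lt (cvg_divn _) _ _.
have c_small : c / n%:R < e by near: n; exact: cvgr_lt (cvg_divn _) _ _.
have c_ge0' : 0 <= c / n%:R by rewrite divr_ge0.
have -> : a n / n%:R = b n / n%:R - c / n%:R by rewrite /b mulrDl addrK.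
by rewrite ltr_norml; apply/andP; split; lra.
Unshelve. all: by end_near. Qed.

End Fekete.
End Sequences.

Section RealHomogeneity.
Variables (R : realType) (K : unitAlgType R) (E : lmodType K) (N : E -> R) (C : R).
Hypotheses (C_ge0 : 0 <= C) (N_ge0 : forall x, 0 <= N x)
  (N_subadd : forall x y, N (x + y) <= N x + N y) (NN : forall x, N (- x) = N x)
  (N_natmul : forall x n, N (x *+ n) = n%:R * N x)
  (N_scale_le : forall s x, 0 <= s <= 1 -> N (s%:A *: x) <= C * s * N x).

Let natmul_scale (x : E) n : x *+ n = (n%:R)%:A *: x.
Proof. by rewrite scaler_nat -scalerMnl scale1r. Qed.

Let natmul_approx_le t x n : 0 <= t ->
  n%:R * `|N (t%:A *: x) - t * N x| <= (C + 1) * N x.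
Proof.
move=> t_ge0; have nt_ge0 : 0 <= n%:R * t by rewrite mulr_ge0.
set m := Num.truncn (n%:R * t); set s := n%:R * t - m%:R.
have /andP[m_le m_gt] := truncn_itv nt_ge0; rewrite -/m in m_le m_gt.
have s_ge0 : 0 <= s by rewrite subr_ge0.
have s_le1 : s <= 1 by rewrite /s; rewrite -natr1 in m_gt; lra.
have split_nt : (t%:A *: x) *+ n = x *+ m + s%:A *: x.
  rewrite !natmul_scale scalerA -scalerDl; congr (_ *: x).
  by rewrite -scalerAl mul1r scalerA -scalerDl /s addrC subrK.
have Nsx_le : N (s%:A *: x) <= C * N x.
  have := @N_scale_le s x; rewrite s_ge0 s_le1 => /(_ isT) /le_trans; apply.
  by rewrite -mulrA ler_wpM2l // ler_piMl.
have upper : n%:R * N (t%:A *: x) <= m%:R * N x + C * N x.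
  rewrite -N_natmul split_nt -N_natmul.
  by apply: (le_trans (N_subadd _ _)); rewrite lerD2l.
have lower : m%:R * N x <= n%:R * N (t%:A *: x) + C * N x.
  rewrite -!N_natmul (_ : x *+ m = (t%:A *: x) *+ n - s%:A *: x).
    by apply: (le_trans (N_subadd _ _)); rewrite NN lerD2l.
  by rewrite split_nt addrK.
have ntN : n%:R * (t * N x) = m%:R * N x + s * N x.
  by rewrite mulrA -mulrDl /s addrC subrK.
have sN_le : s * N x <= N x by rewrite ler_piMl.
have sN_ge0 : 0 <= s * N x by rewrite mulr_ge0.
rewrite -[n%:R]ger0_norm // -normrM mulrBr ler_norml; apply/andP; split; lra.
Qed.

Lemma real_homogeneous t x : 0 <= t -> N (t%:A *: x) = t * N x.
Proof.
move=> t_ge0; apply/eqP; rewrite -subr_eq0 -normr_le0.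
apply: (@le0_nat_mul_bounded _ _ ((C + 1) * N x)) => n.
exact: natmul_approx_le.
Qed.

End RealHomogeneity.

Section AbsoluteValue.
Variables (R : realType) (K : unitAlgType R) (absK : K -> R).
Hypothesis absK_absval : is_absval absK.

Lemma absvalM x y : absK (x * y) = absK x * absK y.
Proof. by case: absK_absval. Qed.

Lemma absval_eq0 x : absK x = 0 <-> x = 0.
Proof. by case: absK_absval. Qed.

Lemma absvalD x y : absK (x + y) <= absK x + absK y.
Proof. by case: absK_absval. Qed.

Lemma absval_scale1 (r : R) : absK (r%:A) = `|r|.
Proof. by case: absK_absval. Qed.

Lemma absval0 : absK 0 = 0.
Proof. exact/absval_eq0. Qed.

Lemma absvalN1 : absK (-1) = 1.
Proof. by rewrite -scaleN1r absval_scale1 normrN normr1. Qed.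

Lemma absvalN x : absK (- x) = absK x.
Proof. by rewrite -mulN1r absvalM absvalN1 mul1r. Qed.

Lemma absval_ge0 x : 0 <= absK x.
Proof. by have := absvalD x (- x); rewrite subrr absval0 absvalN; lra. Qed.

Lemma absvalB x y : absK (x - y) = absK (y - x).
Proof. by rewrite -absvalN opprB. Qed.

Lemma absval_lipschitz x y : `|absK x - absK y| <= absK (x - y).
Proof.
rewrite ler_norml; apply/andP; split.
  by have := absvalD (y - x) x; rewrite subrK absvalB; lra.
by have := absvalD (x - y) y; rewrite subrK; lra.
Qed.

Lemma absvalZ (r : R) x : absK (r *: x) = `|r| * absK x.
Proof. by rewrite -[x]mul1r scalerAl absvalM absval_scale1 mul1r. Qed.

Lemma absval_polar l : l != 0 ->
  exists2 v, absK v = 1 & l = (absK l)%:A * v.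
Proof.
move=> l_neq0; have l_gt0 : 0 < absK l.
  by rewrite lt_def absval_ge0 andbT; apply: contra_neq l_neq0 => /absval_eq0.
exists ((absK l)^-1 *: l).
  by rewrite absvalZ ger0_norm ?invr_ge0 ?absval_ge0 // mulVf ?gt_eqF.
by rewrite -scalerAl mul1r scalerA divff ?gt_eqF // scale1r.
Qed.

End AbsoluteValue.

Section Metric.
Variables (R : realType) (T : Type) (d : T -> T -> R).
Hypothesis d_metric : is_metric d.

Lemma dist_ge0 x y : 0 <= d x y.
Proof. by case: d_metric. Qed.

Lemma dist_refl x : d x x = 0.
Proof. by case: d_metric => _ /(_ x x) [_ ->]. Qed.

Lemma distC x y : d x y = d y x.
Proof. by case: d_metric. Qed.

Lemma dist_triangle x y z : d x z <= d x y + d y z.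
Proof. by case: d_metric. Qed.

Lemma dist_lipschitz x y x' y' : `|d x y - d x' y'| <= d x x' + d y y'.
Proof.
have := dist_triangle x x' y; have := dist_triangle x' y' y.
have := dist_triangle x' x y'; have := dist_triangle x y y'.
rewrite (distC x' x) (distC y' y) ler_norml => *; apply/andP; split; lra.
Qed.

End Metric.

Section BorelK.
Variables (R : realType) (K : unitAlgType R) (absK : K -> R).
Hypothesis absK_absval : is_absval absK.

Definition absK_continuous (f : K -> R) := forall x e, 0 < e ->
  exists2 r, 0 < r & forall y, absK (y - x) < r -> `|f y - f x| < e.

Lemma absK_continuous_measurable (f : KBorel absK -> R) (A : set (KBorel absK)) :
  absK_continuous f -> measurable_fun A f.
Proof.
move=> f_cont mA; apply: (measurability _ (measurable_realfun.RGenOInfty.measurableE R)) => //.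
move=> /= _ [_ [a ->] <-]; apply: measurableI => //; apply: sub_sigma_algebra.
move=> x /=; rewrite in_itv /= andbT => ax.
have [r r_gt0 near_x] := f_cont x (f x - a) ltac:(by rewrite subr_gt0).
exists r => // y /near_x; rewrite ltr_norml in_itv /= andbT => /andP[? ?]; lra.
Qed.

Lemma measurable_Usph : measurable (Usph absK).
Proof.
have -> : Usph absK = ~` [set u : KBorel absK | absK u != 1].
  by apply/seteqP; split => u /=; case: eqP.
apply: measurableC; apply: sub_sigma_algebra => x /= x_neq1.
exists `|absK x - 1|; first by rewrite normr_gt0 subr_eq0.
move=> y xy_lt; apply/eqP => y1.
by have := absval_lipschitz absK_absval y x; rewrite y1 distrC; lra.
Qed.

Lemma measurable_mulr_unit v : absK v = 1 ->
  measurable_fun setT (fun u : KBorel absK => (u : K) * v : KBorel absK).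
Proof.
move=> v1; have KBorelE : @measurable _ (KBorel absK) = <<s Kopen absK >> by [].
apply: (measurability _ KBorelE) => //.
move=> _ [A A_open <-]; apply: sub_sigma_algebra => x [_ /= Axv].
have [e e_gt0 near_xv] := A_open _ Axv.
exists e => // y yx_lt; split => //=; apply: near_xv.
by rewrite -mulrBl absvalM // v1 mulr1.
Qed.

End BorelK.

Section IntegralOnFullSet.
Context d (T : measurableType d) (R : realType).
Variables (mu : probability T R) (D : set T).
Hypotheses (mD : measurable D) (muD : mu D = 1%E).

Lemma bounded_integrable (f : T -> R) :
  measurable_fun D f -> [bounded f x | x in D] -> mu.-integrable D (EFin \o f).
Proof.
apply: measurable_bounded_integrable => //.
by rewrite (le_lt_trans (probability_le1 _ mD)) ?ltry.
Qed.

Lemma Rintegral_le_affine (f g h : T -> R) (al be ga : R) :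
  mu.-integrable D (EFin \o f) -> mu.-integrable D (EFin \o g) ->
  mu.-integrable D (EFin \o h) ->
  (forall x, D x -> f x <= al * g x + be * h x + ga) ->
  \int[mu]_(x in D) f x <=
    al * \int[mu]_(x in D) g x + be * \int[mu]_(x in D) h x + ga.
Proof.
move=> f_int g_int h_int f_le.
have alg_int : mu.-integrable D (EFin \o (fun x => al * g x)).
  by apply: eq_integrable (integrableZl mD al g_int) => // x _.
have beh_int : mu.-integrable D (EFin \o (fun x => be * h x)).
  by apply: eq_integrable (integrableZl mD be h_int) => // x _.
have sum_int : mu.-integrable D (EFin \o (fun x => al * g x + be * h x)).
  by apply: eq_integrable (integrableD mD alg_int beh_int) => // x _.
have ga_int := finite_measure_integrable_cst mu (A := D) ga mD.
have rhs_int : mu.-integrable D (EFin \o (fun x => al * g x + be * h x + ga)).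
  by apply: eq_integrable (integrableD mD sum_int ga_int) => // x _.
apply: (le_trans (le_Rintegral mD f_int rhs_int f_le)).
rewrite RintegralD // RintegralD // !RintegralZl // Rintegral_cst //.
have -> : fine (mu D) = 1 by rewrite muD.
by rewrite mulr1.
Qed.

End IntegralOnFullSet.

Section AveragedDistance.
Variables (R : realType) (K : unitAlgType R) (absK : K -> R)
  (mu : probability (KBorel absK) R) (E : lmodType K) (d : E -> E -> R)
  (C0 C1 C2 C3 : R).
Hypotheses (absK_absval : is_absval absK) (mu_haar : right_haar_on_U mu)
  (d_mvs : metric_vector_space absK d)
  (d_trans : translation_invariant_up_to d C0)
  (d_lip : lipschitz_multiplicative absK d C1 C2 C3).

Let U := Usph absK.

Let d_metric : is_metric d. Proof. by case: d_mvs. Qed.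

Let C0_ge0 : 0 <= C0.
Proof. by have := d_trans 0 0 0; rewrite addr0 dist_refl //; lra. Qed.

Let C1_ge1 : 1 <= C1. Proof. by case: d_lip. Qed.

Let d_scale_le l x y : d (l *: x) (l *: y) <= C1 * absK l * d x y + C2 * absK l + C3.
Proof. by case: d_lip => _ _ _ /(_ l x y) []. Qed.

Definition scaled_dist (a b : E) (u : KBorel absK) : R := d ((u : K) *: a) ((u : K) *: b).

Let d0E a b : d0 mu d a b = \int[mu]_(u in U) scaled_dist a b u.
Proof. by []. Qed.

Lemma scaled_dist_continuous a b : absK_continuous absK (scaled_dist a b).
Proof.
have scale_cont (c : E) u e : 0 < e ->
    exists2 r, 0 < r & forall y, absK (y - u) < r -> d (y *: c) (u *: c) < e.
  move=> e_gt0; case: d_mvs => _ _ /(_ u c e e_gt0) [r r_gt0 near_u].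
  exists r => // y yu_lt; rewrite (distC d_metric); apply: near_u; first by rewrite absvalB.
  by rewrite dist_refl.
move=> u e e_gt0; have e2_gt0 : 0 < e / 2 by rewrite divr_gt0.
have [ra ra_gt0 near_a] := scale_cont a u _ e2_gt0.
have [rb rb_gt0 near_b] := scale_cont b u _ e2_gt0.
exists (Num.min ra rb); first by rewrite lt_min ra_gt0 rb_gt0.
move=> y; rewrite lt_min => /andP[/near_a ya_lt /near_b yb_lt].
apply: le_lt_trans (dist_lipschitz d_metric _ _ _ _) _.
by rewrite [e]splitr ltrD.
Qed.

Lemma scaled_dist_measurable a b A : measurable_fun A (scaled_dist a b).
Proof. exact: absK_continuous_measurable (scaled_dist_continuous a b). Qed.

Lemma scaled_dist_integrable a b : mu.-integrable U (EFin \o scaled_dist a b).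
Proof.
apply: (bounded_integrable mu (measurable_Usph absK_absval)).
  exact: scaled_dist_measurable.
exists (C1 * d a b + C2 + C3); split; first exact: num_real.
move=> M M_gt u /= Uu; rewrite ger0_norm ?(dist_ge0 d_metric) //.
by apply: le_trans (ltW M_gt); have := d_scale_le u a b; rewrite Uu !mulr1.
Qed.

Lemma d0_le_affine a b c e c' e' al be ga :
  (forall u, U u -> scaled_dist a b u <= al * scaled_dist c e u + be * scaled_dist c' e' u + ga) ->
  d0 mu d a b <= al * d0 mu d c e + be * d0 mu d c' e' + ga.
Proof.
rewrite !d0E; apply: (Rintegral_le_affine (measurable_Usph absK_absval)).
- by case: mu_haar.
- exact: scaled_dist_integrable.
- exact: scaled_dist_integrable.
- exact: scaled_dist_integrable.
Qed.

Lemma d0_ge0 a b : 0 <= d0 mu d a b.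
Proof. by apply: Rintegral_ge0 => u _; exact: dist_ge0. Qed.

Lemma d0_00 : d0 mu d 0 0 = 0.
Proof.
rewrite d0E (eq_Rintegral mu (g := fun=> 0)); last first.
  by move=> u _; rewrite /scaled_dist scaler0 dist_refl.
by rewrite Rintegral_cst ?mul0r //; exact: measurable_Usph.
Qed.

Lemma d0_unitZ v a b : absK v = 1 -> d0 mu d (v *: a) (v *: b) = d0 mu d a b.
Proof.
move=> v1; rewrite !d0E /Rintegral; congr fine.
pose phi (u : KBorel absK) : KBorel absK := (u : K) * v.
have phiU : phi @^-1` U = U.
  by apply/seteqP; split => u; rewrite /phi /U /Usph /= absvalM // v1 mulr1.
have phi_measurable := measurable_mulr_unit absK_absval v1.
have := ge0_integral_pushforward phi_measurable mu
  (measurable_Usph absK_absval)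
  ((measurable_realfun.measurable_EFinP _ _).2 (@scaled_dist_measurable a b U))
  (fun u _ => dist_ge0 d_metric _ _ : (0 <= (scaled_dist a b u)%:E)%E).
rewrite phiU => pushforwardE.
transitivity (\int[mu]_(u in U) ((EFin \o scaled_dist a b) \o phi) u)%E.
  by apply: eq_integral => u _ /=; rewrite /scaled_dist /phi !scalerA.
rewrite -pushforwardE; apply: eq_measure_integral => A mA _.
by case: mu_haar => _ /(_ v v1 A mA).
Qed.

Lemma d0_subadd a b : d0 mu d (a + b) 0 <= d0 mu d a 0 + d0 mu d b 0 + C0.
Proof.
rewrite -[d0 mu d a 0]mul1r -[d0 mu d b 0]mul1r.
apply: d0_le_affine => u _; rewrite !mul1r /scaled_dist !scaler0 scalerDr.
have := d_trans ((u : K) *: a) 0 ((u : K) *: b); rewrite add0r.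
have := dist_triangle d_metric ((u : K) *: a + (u : K) *: b) ((u : K) *: b) 0.
lra.
Qed.

Lemma d0_scale_le (s : R) a : 0 <= s ->
  d0 mu d (s%:A *: a) 0 <= C1 * s * d0 mu d a 0 + (C2 * s + C3).
Proof.
move=> s_ge0.
have := @d0_le_affine (s%:A *: a) 0 a 0 a 0 (C1 * s) 0 (C2 * s + C3).
rewrite mul0r addr0; apply=> u _; rewrite mul0r addr0 /scaled_dist !scaler0.
rewrite scalerA -scalerAr mulr1 -[u in s *: u]mul1r scalerAl -scalerA.
have := d_scale_le s%:A ((u : K) *: a) 0; rewrite scaler0 absval_scale1 //.
by rewrite ger0_norm // addrA.
Qed.

Let delta0E x : delta0 mu d x 0 = limn (fun n => d0 mu d (x *+ n) 0 / n%:R).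
Proof. by rewrite /delta0; congr (limn _); apply: funext => n; rewrite mul0rn mulrC. Qed.

Lemma cvg_delta0 x : d0 mu d (x *+ n) 0 / n%:R @[n --> \oo] --> delta0 mu d x 0.
Proof.
have a_subadd m n : d0 mu d (x *+ (m + n)) 0 <= d0 mu d (x *+ m) 0 + d0 mu d (x *+ n) 0 + C0.
  by rewrite mulrnDr d0_subadd.
have a_cvg := fekete_cvg C0_ge0 (fun n => d0_ge0 _ _) a_subadd.
by rewrite delta0E (cvg_lim _ a_cvg).
Qed.

Lemma delta0_ge0 x : 0 <= delta0 mu d x 0.
Proof.
apply: (ler_cvg_to (cvg_cst 0) (@cvg_delta0 x)); apply: nearW => n.
by rewrite divr_ge0 ?d0_ge0.
Qed.

Lemma delta0_le_affine x y z al be ga :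
  (forall n, d0 mu d (x *+ n) 0 <= al * d0 mu d (y *+ n) 0 + be * d0 mu d (z *+ n) 0 + ga) ->
  delta0 mu d x 0 <= al * delta0 mu d y 0 + be * delta0 mu d z 0.
Proof.
move=> x_le; rewrite -[_ + _]addr0.
apply: (ler_cvg_to (@cvg_delta0 x) (g := fun n =>
  al * (d0 mu d (y *+ n) 0 / n%:R) + be * (d0 mu d (z *+ n) 0 / n%:R) + ga / n%:R)).
  apply: cvgD; last exact: cvg_divn.
  by apply: cvgD; apply: cvgM; (exact: cvg_cst || exact: cvg_delta0).
near=> n; have n_gt0 : (0 : R) < n%:R by rewrite ltr0n; near: n; exact: nbhs_infty_gt.
by rewrite !mulrA -!mulrDl ler_pM2r ?invr_gt0.
Unshelve. all: by end_near. Qed.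

Lemma delta0_subadd x y : delta0 mu d (x + y) 0 <= delta0 mu d x 0 + delta0 mu d y 0.
Proof.
rewrite -[delta0 mu d x 0]mul1r -[delta0 mu d y 0]mul1r.
by apply: (delta0_le_affine (ga := C0)) => n; rewrite !mul1r mulrnDl d0_subadd.
Qed.

Lemma delta0_unitZ v x : absK v = 1 -> delta0 mu d (v *: x) 0 = delta0 mu d x 0.
Proof.
move=> v1; rewrite !delta0E; congr (limn _); apply: funext => n.
by rewrite scalerMnr -(scaler0 _ v) d0_unitZ ?scaler0.
Qed.

Lemma delta0N x : delta0 mu d (- x) 0 = delta0 mu d x 0.
Proof. by rewrite -scaleN1r delta0_unitZ // absvalN1. Qed.

Lemma delta0_00 : delta0 mu d 0 0 = 0.
Proof.
rewrite delta0E (_ : (fun n => _) = fun=> 0) ?lim_cst //.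
by apply: funext => n; rewrite mul0rn d0_00 mul0r.
Qed.

Lemma delta0_natmul x p : delta0 mu d (x *+ p) 0 = p%:R * delta0 mu d x 0.
Proof.
case: p => [|p]; first by rewrite mulr0n delta0_00 mul0r.
rewrite [LHS]delta0E (_ : (fun n => _) =
  fun n => p.+1%:R * (d0 mu d (x *+ (p.+1 * n)) 0 / (p.+1 * n)%:R)).
  apply: cvg_lim => //; apply: cvgM; first exact: cvg_cst.
  exact: cvg_comp (@cvg_mulnl p.+1 (ltn0Sn p)) (@cvg_delta0 x).
by apply: funext => n; rewrite -mulrnA natrM invfM mulrCA mulVKf.
Qed.

Lemma delta0_scale_le (s : R) x : 0 <= s ->
  delta0 mu d (s%:A *: x) 0 <= C1 * s * delta0 mu d x 0.
Proof.
move=> s_ge0; have := @delta0_le_affine (s%:A *: x) x x (C1 * s) 0 (C2 * s + C3).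
by rewrite mul0r addr0; apply=> n; rewrite mul0r addr0 scalerMnr d0_scale_le.
Qed.

Lemma delta0_scale l x : delta0 mu d (l *: x) 0 = absK l * delta0 mu d x 0.
Proof.
have [->|l_neq0] := eqVneq l 0; first by rewrite scale0r delta0_00 absval0 // mul0r.
have [v v1 l_polar] := absval_polar absK_absval l_neq0.
have delta0_real_homogeneous := real_homogeneous (N := fun y => delta0 mu d y 0)
  (le_trans ler01 C1_ge1) delta0_ge0 delta0_subadd delta0N delta0_natmul
  (fun s y s01 => delta0_scale_le y (andP s01).1).
by rewrite {1}l_polar -scalerA delta0_real_homogeneous ?absval_ge0 // delta0_unitZ.
Qed.

Lemma delta0_seminorm :
  [/\ delta0 mu d 0 0 = 0, forall x, 0 <= delta0 mu d x 0,
      forall l x, delta0 mu d (l *: x) 0 = absK l * delta0 mu d x 0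
    & forall x y, delta0 mu d (x + y) 0 <= delta0 mu d x 0 + delta0 mu d y 0].
Proof.
split; [exact: delta0_00 | exact: delta0_ge0 | exact: delta0_scale | exact: delta0_subadd].
Qed.

End AveragedDistance.

Theorem proposition6
  (R : realType) (K : unitAlgType R) (absK : K -> R)
  (mu : probability (KBorel absK) R)
  (E : lmodType K) (d : E -> E -> R) (C0 C1 C2 C3 : R) :
  is_absval absK ->
  right_haar_on_U mu ->
  metric_vector_space absK d ->
  translation_invariant_up_to d C0 ->
  lipschitz_multiplicative absK d C1 C2 C3 ->
  let nrm := fun x : E => delta0 mu d x 0 in
  let E_0 := E0 mu d in
  (* E_0 is a linear subspace, so that E / E_0 makes sense *)
  [/\ E_0 0, (forall x y, E_0 x -> E_0 y -> E_0 (x + y))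
    & (forall (l : K) x, E_0 x -> E_0 (l *: x))] /\
  (* ||x + E_0|| := delta_0(x,0) does not depend on the representative *)
  (forall x y : E, E_0 (x - y) -> nrm x = nrm y) /\
  (* ||.|| is a norm on E / E_0 *)
  [/\ forall x : E, 0 <= nrm x,
      forall x : E, nrm x = 0 <-> E_0 x,
      forall (l : K) (x : E), nrm (l *: x) = absK l * nrm x
    & forall x y : E, nrm (x + y) <= nrm x + nrm y].
Proof.
move=> absK_absval mu_haar d_mvs d_trans d_lip nrm E_0.
have [N0 N_ge0 N_scale N_subadd] :=
  delta0_seminorm absK_absval mu_haar d_mvs d_trans d_lip.
rewrite {}/nrm {}/E_0 /E0 /=; set N := delta0 mu d in N0 N_ge0 N_scale N_subadd *.
have NB x y : N (x - y) 0 = N (y - x) 0.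
  by rewrite -opprB -[- _]scaleN1r N_scale absvalN1 // mul1r.
have N_le x y : N x 0 <= N (x - y) 0 + N y 0.
  by rewrite -{1}(subrK y x); exact: N_subadd.
split; [split => [|x y x0 y0|l x x0] | split => [x y xy0|]] => //.
- by apply/le_anti; rewrite N_ge0 andbT (le_trans (N_subadd x y)) // x0 y0 addr0.
- by rewrite N_scale x0 mulr0.
- apply/le_anti; have := N_le x y; have := N_le y x.
  by rewrite NB xy0 !add0r => -> ->.
Qed.
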